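(* Let $(M,\mathcal{X})\models\mathrm{RCA}_0$, let $\mathcal{U}$ be an ultrafilter on the Boolean algebra $\mathcal{X}$ all of whose elements are cofinal in $M$, and let $\mathcal{F}/\mathcal{U}$ be the (first-order part of the) second-order restricted ultrapower. If $(M,\mathcal{X})$ satisfies $\Sigma_n$-comprehension for some $n\in\mathbb{N}$, then $M\preccurlyeq_{\Sigma_{n+2}}\mathcal{F}/\mathcal{U}$, i.e. every first-order $\Sigma_{n+2}$ formula with parameters from $M$ has the same truth value in $M$ and in $\mathcal{F}/\mathcal{U}$.
   Context: $\mathrm{RCA}_0$ is the second-order system with Robinson arithmetic, $\Sigma^0_1$-induction and $\Delta^0_1$-comprehension. $(M,\mathcal{X})$ satisfies $\Sigma_n$-comprehension if every subset of $M$ defined by a first-order $\Sigma_n$ formula with parameters from $M$ belongs to $\mathcal{X}$. Second-order restricted ultrapower: let $\mathcal{F}$ be the set of all total functions $M\to M$ belonging to $\mathcal{X}$; for $f,g\in\mathcal{F}$ put $f\sim g$ iff $\{i\in M: f(i)=g(i)\}\in\mathcal{U}$; $\mathcal{F}/\mathcal{U}$ is the set of classes $[f]$, with $[f]+[g]=[f+g]$, $[f]\times[g]=[f\times g]$ (pointwise), $[f]<[g]$ iff $\{i: f(i)<g(i)\}\in\mathcal{U}$. $M$ embeds into $\mathcal{F}/\mathcal{U}$ via constant functions. *)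

(** * Syntax: the language {0, 1, +, x, <, =} of arithmetic, plus the
    second-order atomic formula [t \in X_k] (set variables indexed by nat).
    Number variables are de Bruijn indices. *)

Inductive term : Type :=
  | Var : nat -> term
  | Zero : term
  | One : term
  | Plus : term -> term -> term
  | Times : term -> term -> term.

Inductive form : Type :=
  | Eq : term -> term -> form
  | Lt : term -> term -> form
  | Mem : term -> nat -> form
  | Not : form -> form
  | And : form -> form -> form
  | Or : form -> form -> form
  | Imp : form -> form -> form
  | Ex : form -> form
  | All : form -> form
  | BEx : term -> form -> form          (* exists x < t  (t in the outer context) *)
  | BAll : term -> form -> form.        (* forall x < t  (t in the outer context) *)

Fixpoint first_order (phi : form) : Prop :=
  match phi with
  | Eq _ _ | Lt _ _ => True
  | Mem _ _ => False
  | Not p => first_order p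
  | And p q | Or p q | Imp p q => first_order p /\ first_order q
  | Ex p | All p | BEx _ p | BAll _ p => first_order p
  end.

Inductive delta0 : form -> Prop :=
  | d0_eq s t : delta0 (Eq s t)
  | d0_lt s t : delta0 (Lt s t)
  | d0_mem t k : delta0 (Mem t k)
  | d0_not p : delta0 p -> delta0 (Not p)
  | d0_and p q : delta0 p -> delta0 q -> delta0 (And p q)
  | d0_or p q : delta0 p -> delta0 q -> delta0 (Or p q)
  | d0_imp p q : delta0 p -> delta0 q -> delta0 (Imp p q)
  | d0_bex t p : delta0 p -> delta0 (BEx t p)
  | d0_ball t p : delta0 p -> delta0 (BAll t p).

Inductive is_sigma : nat -> form -> Prop :=
  | sig_0 p : delta0 p -> is_sigma 0 p
  | sig_pi n p : is_pi n p -> is_sigma (S n) p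
  | sig_ex n p : is_sigma (S n) p -> is_sigma (S n) (Ex p)
with is_pi : nat -> form -> Prop :=
  | pi_0 p : delta0 p -> is_pi 0 p
  | pi_sig n p : is_sigma n p -> is_pi (S n) p
  | pi_all n p : is_pi (S n) p -> is_pi (S n) (All p).

(** A structure has a carrier [dom], a domain predicate [inD] (the range of
    the quantifiers), an interpretation [eqS] of the equality symbol, and
    interpretations of 0, 1, +, x, <. *)
Record Lstruct : Type := {
  dom : Type;
  inD : dom -> Prop;
  eqS : dom -> dom -> Prop;
  zeroS : dom;
  oneS : dom;
  addS : dom -> dom -> dom;
  mulS : dom -> dom -> dom;
  ltS : dom -> dom -> Prop
}.

Definition scons {A : Type} (x : A) (e : nat -> A) : nat -> A :=
  fun k => match k with 0 => x | S k' => e k' end.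

Fixpoint teval (S : Lstruct) (e : nat -> dom S) (t : term) : dom S :=
  match t with
  | Var k => e k
  | Zero => zeroS S
  | One => oneS S
  | Plus a b => addS S (teval S e a) (teval S e b)
  | Times a b => mulS S (teval S e a) (teval S e b)
  end.

Fixpoint sat (S : Lstruct) (sets : nat -> dom S -> Prop) (e : nat -> dom S)
    (phi : form) : Prop :=
  match phi with
  | Eq a b => eqS S (teval S e a) (teval S e b)
  | Lt a b => ltS S (teval S e a) (teval S e b)
  | Mem a k => sets k (teval S e a)
  | Not p => ~ sat S sets e p
  | And p q => sat S sets e p /\ sat S sets e q
  | Or p q => sat S sets e p \/ sat S sets e q
  | Imp p q => sat S sets e p -> sat S sets e q
  | Ex p => exists x, inD S x /\ sat S sets (scons x e) p
  | All p => forall x, inD S x -> sat S sets (scons x e) p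
  | BEx t p => exists x, inD S x /\ ltS S x (teval S e t) /\ sat S sets (scons x e) p
  | BAll t p => forall x, inD S x -> ltS S x (teval S e t) -> sat S sets (scons x e) p
  end.

Definition nosets {D : Type} : nat -> D -> Prop := fun _ _ => False.

Record model2 : Type := {
  carr : Type;
  zero : carr;
  one : carr;
  add : carr -> carr -> carr;
  mul : carr -> carr -> carr;
  lt : carr -> carr -> Prop;
  X : (carr -> Prop) -> Prop
}.

Definition fo_part (M : model2) : Lstruct :=
  {| dom := carr M; inD := fun _ => True; eqS := @eq (carr M);
     zeroS := zero M; oneS := one M; addS := add M; mulS := mul M; ltS := lt M |}.

Definition Q_axioms (M : model2) : Prop :=
  (forall x, add M x (one M) <> zero M) /\
  (forall x y, add M x (one M) = add M y (one M) -> x = y) /\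
  (forall x, x <> zero M -> exists y, x = add M y (one M)) /\
  (forall x, add M x (zero M) = x) /\
  (forall x y, add M x (add M y (one M)) = add M (add M x y) (one M)) /\
  (forall x, mul M x (zero M) = zero M) /\
  (forall x y, mul M x (add M y (one M)) = add M (mul M x y) x) /\
  (forall x y, lt M x y <-> exists z, add M x (add M z (one M)) = y).

Definition sets_in_X (M : model2) (sets : nat -> carr M -> Prop) : Prop :=
  forall k, X M (sets k).

Definition Sigma01_induction (M : model2) : Prop :=
  forall phi, is_sigma 1 phi ->
  forall (sets : nat -> carr M -> Prop) (e : nat -> carr M), sets_in_X M sets ->
    sat (fo_part M) sets (scons (zero M) e) phi ->
    (forall x, sat (fo_part M) sets (scons x e) phi ->
               sat (fo_part M) sets (scons (add M x (one M)) e) phi) ->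
    forall x, sat (fo_part M) sets (scons x e) phi.

Definition Delta01_comprehension (M : model2) : Prop :=
  forall phi psi, is_sigma 1 phi -> is_pi 1 psi ->
  forall (sets : nat -> carr M -> Prop) (e : nat -> carr M), sets_in_X M sets ->
    (forall x, sat (fo_part M) sets (scons x e) phi <->
               sat (fo_part M) sets (scons x e) psi) ->
    X M (fun x => sat (fo_part M) sets (scons x e) phi).

Definition RCA0 (M : model2) : Prop :=
  Q_axioms M /\ Sigma01_induction M /\ Delta01_comprehension M.

Definition Sigma_n_comprehension (M : model2) (n : nat) : Prop :=
  forall phi, first_order phi -> is_sigma n phi ->
  forall e : nat -> carr M, X M (fun x => sat (fo_part M) nosets (scons x e) phi).

Definition ultrafilter_on (M : model2) (U : (carr M -> Prop) -> Prop) : Prop :=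
  (forall A, U A -> X M A) /\
  U (fun _ => True) /\
  ~ U (fun _ => False) /\
  (forall A B, U A -> U B -> U (fun x => A x /\ B x)) /\
  (forall A B, U A -> X M B -> (forall x, A x -> B x) -> U B) /\
  (forall A, X M A -> U A \/ U (fun x => ~ A x)).

Definition cofinal (M : model2) (A : carr M -> Prop) : Prop :=
  forall m, exists a, A a /\ lt M m a.

(** Cantor pairing as a relation: z = <x, y>  iff  2z = (x+y)(x+y+1) + 2x. *)
Definition pair_rel (M : model2) (z x y : carr M) : Prop :=
  add M z z = add M (mul M (add M x y) (add M (add M x y) (one M))) (add M x x).

Definition fun_in_X (M : model2) (f : carr M -> carr M) : Prop :=
  X M (fun z => exists i, pair_rel M z i (f i)).

(** The second-order restricted ultrapower F/U: elements are functions in X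
    (domain predicate [fun_in_X]), equality is U-a.e. equality (so the
    structure is F/U presented before quotienting by ~), operations are
    pointwise, and [f] < [g] iff {i | f i < g i} in U. *)
Definition restricted_ultrapower (M : model2) (U : (carr M -> Prop) -> Prop)
    : Lstruct :=
  {| dom := carr M -> carr M;
     inD := fun_in_X M;
     eqS := fun f g => U (fun i => f i = g i);
     zeroS := fun _ => zero M;
     oneS := fun _ => one M;
     addS := fun f g i => add M (f i) (g i);
     mulS := fun f g i => mul M (f i) (g i);
     ltS := fun f g => U (fun i => lt M (f i) (g i)) |}.

Definition const_fun (M : model2) (m : carr M) : carr M -> carr M := fun _ => m.

(** Łoś's theorem holds in F/U for Sigma_n formulas.  For such a formula and
    functions f_1, ..., f_k in X, the set of indices i at which the formula holds
    of f_1 i, ..., f_k i is in X: code the tuple by Cantor pairing, apply Sigma_n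
    comprehension to the formula that decodes it, and pull back along
    i |-> <f_1 i, ..., f_k i>, a function in X by Delta^0_1 comprehension.  The
    existential step needs witness functions in X; least witnesses (Sigma^0_1
    induction gives the least number principle for sets in X) have a Delta^0_1
    graph.

    A Pi_(n+1) formula with Sigma_n matrix that holds in M holds at every index,
    hence in F/U by Łoś for the matrix at arbitrary arguments in X.  If it fails
    in M at every index, a counterexample tuple can be chosen as one function in
    X, because the set of counterexamples is the complement of a Sigma_n truth
    set; Łoś for the matrix then makes it fail in F/U.  Existential quantifiers
    in front are witnessed by constant functions upwards and by evaluation at a
    single index downwards, which gives Sigma_(n+2) elementarity. *)

From Stdlib Require Import Arith Lia Ring Classical FunctionalExtensionality
  PropExtensionality IndefiniteDescription.

(** * Syntactic transformations of formulas *)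

Fixpoint ren_term (s : nat -> nat) (t : term) : term :=
  match t with
  | Var k => Var (s k)
  | Zero => Zero
  | One => One
  | Plus a b => Plus (ren_term s a) (ren_term s b)
  | Times a b => Times (ren_term s a) (ren_term s b)
  end.

Definition up_ren (s : nat -> nat) : nat -> nat :=
  fun k => match k with 0 => 0 | S k => S (s k) end.

Fixpoint ren_form (s : nat -> nat) (p : form) : form :=
  match p with
  | Eq a b => Eq (ren_term s a) (ren_term s b)
  | Lt a b => Lt (ren_term s a) (ren_term s b)
  | Mem a k => Mem (ren_term s a) k
  | Not p => Not (ren_form s p)
  | And p q => And (ren_form s p) (ren_form s q)
  | Or p q => Or (ren_form s p) (ren_form s q)
  | Imp p q => Imp (ren_form s p) (ren_form s q)
  | Ex p => Ex (ren_form (up_ren s) p)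
  | All p => All (ren_form (up_ren s) p)
  | BEx t p => BEx (ren_term s t) (ren_form (up_ren s) p)
  | BAll t p => BAll (ren_term s t) (ren_form (up_ren s) p)
  end.

Definition shift (p : form) : form := ren_form S p.

Lemma teval_ren St rho s t :
  teval St rho (ren_term s t) = teval St (fun k => rho (s k)) t.
Proof. induction t; simpl; congruence. Qed.

Lemma scons_up_ren {A} (x : A) rho s :
  (fun k => scons x rho (up_ren s k)) = scons x (fun k => rho (s k)).
Proof. apply functional_extensionality; intros [|k]; reflexivity. Qed.

Lemma sat_ren St sets p : forall rho s,
  sat St sets rho (ren_form s p) <-> sat St sets (fun k => rho (s k)) p.
Proof.
  induction p; intros rho s; simpl; rewrite ?teval_ren;
    try (rewrite ?IHp, ?IHp1, ?IHp2; tauto);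
    setoid_rewrite IHp; setoid_rewrite scons_up_ren; reflexivity.
Qed.

Lemma sat_shift St sets rho x p :
  sat St sets (scons x rho) (shift p) <-> sat St sets rho p.
Proof. unfold shift; rewrite sat_ren; reflexivity. Qed.

Lemma ren_first_order s p : first_order p -> first_order (ren_form s p).
Proof. revert s; induction p; simpl; intros; intuition. Qed.

Lemma ren_delta0 s p : delta0 p -> delta0 (ren_form s p).
Proof. intros H; revert s; induction H; intros; simpl; constructor; auto. Qed.

Lemma ren_sigma : forall n p, is_sigma n p -> forall s, is_sigma n (ren_form s p)
with ren_pi : forall n p, is_pi n p -> forall s, is_pi n (ren_form s p).
Proof.
  - intros n p []; intros s; simpl.
    + apply sig_0, ren_delta0; auto.
    + apply sig_pi, ren_pi; auto.
    + apply sig_ex, ren_sigma; auto.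
  - intros n p []; intros s; simpl.
    + apply pi_0, ren_delta0; auto.
    + apply pi_sig, ren_sigma; auto.
    + apply pi_all, ren_pi; auto.
Qed.

Lemma sat_first_order_sets St p : first_order p -> forall sets sets' rho,
  sat St sets rho p <-> sat St sets' rho p.
Proof.
  induction p; simpl; intros Hp sets sets'; try contradiction;
    try (intro; reflexivity);
    try (destruct Hp as [H1 H2]; setoid_rewrite (IHp1 H1 sets sets');
         setoid_rewrite (IHp2 H2 sets sets'); reflexivity);
    setoid_rewrite (IHp Hp sets sets'); reflexivity.
Qed.

Lemma sigma_succ : forall k p, is_sigma k p -> is_sigma (S k) p
with pi_succ : forall k p, is_pi k p -> is_pi (S k) p.
Proof.
  - intros k p []; [apply sig_pi, pi_0 | apply sig_pi, pi_succ | apply sig_ex, sigma_succ];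
      auto.
  - intros k p []; [apply pi_sig, sig_0 | apply pi_sig, sigma_succ | apply pi_all, pi_succ];
      auto.
Qed.

Lemma delta0_sigma k p : delta0 p -> is_sigma k p.
Proof. intro H; induction k; [apply sig_0 | apply sigma_succ]; auto. Qed.

Lemma quantifier_body_class n p :
  (is_sigma n (Ex p) -> is_sigma n p) /\ (is_pi n (Ex p) -> is_sigma n p) /\
  (is_sigma n (All p) -> is_sigma n p) /\ (is_pi n (All p) -> is_pi n p).
Proof.
  induction n as [|m [I1 [I2 [I3 I4]]]].
  - repeat split; intro H; inversion H; subst;
      match goal with H : delta0 _ |- _ => inversion H end.
  - repeat split; intro H; inversion H; subst; auto using sigma_succ, sig_pi, pi_sig.
Qed.

Lemma sigma_Ex_body n p : is_sigma n (Ex p) -> is_sigma n p.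
Proof. apply quantifier_body_class. Qed.

Lemma sigma_All_body n p : is_sigma n (All p) -> is_sigma n p.
Proof. apply quantifier_body_class. Qed.

Lemma pi_All_body n p : is_pi n (All p) -> is_pi n p.
Proof. apply quantifier_body_class. Qed.

Definition is_Ex (p : form) : Prop := match p with Ex _ => True | _ => False end.
Definition is_All (p : form) : Prop := match p with All _ => True | _ => False end.

Lemma sigma_succ_not_Ex k p : is_sigma (S k) p -> ~ is_Ex p -> is_pi k p.
Proof. intros H Hp; inversion H; subst; auto; contradiction Hp; exact I. Qed.

Lemma pi_succ_not_All k p : is_pi (S k) p -> ~ is_All p -> is_sigma k p.
Proof. intros H Hp; inversion H; subst; auto; contradiction Hp; exact I. Qed.

Lemma sigma_unquantified n p :
  is_sigma n p -> ~ is_Ex p -> ~ is_All p -> delta0 p.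
Proof.
  intros Hs HE HA; revert p Hs HE HA.
  enough (forall p, ~ is_Ex p -> ~ is_All p ->
            (is_sigma n p -> delta0 p) /\ (is_pi n p -> delta0 p)) by firstorder.
  induction n as [|m IH]; intros p HE HA.
  - split; intro H; inversion H; auto.
  - destruct (IH p HE HA); split; intro Hp; inversion Hp; subst; auto;
      solve [contradiction HE; exact I | contradiction HA; exact I].
Qed.

Fixpoint alls (m : nat) (p : form) : form :=
  match m with 0 => p | S m => alls m (All p) end.

Lemma alls_All m p : alls m (All p) = All (alls m p).
Proof. revert p; induction m; intro p; simpl; auto. Qed.

Lemma alls_first_order m p : first_order (alls m p) -> first_order p.
Proof. revert p; induction m; intros p H; simpl in *; auto. apply IHm in H; auto. Qed.

Lemma pi_succ_alls k p : is_pi (S k) p -> exists m c, p = alls m c /\ is_sigma k c.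
Proof.
  induction p; intro H;
    try (exists 0; eexists;
         split; [reflexivity | apply pi_succ_not_All; [exact H | exact (fun Hc => Hc)]]).
  destruct (IHp (pi_All_body _ _ H)) as [m [c [-> Hc]]].
  exists (S m), c; split; auto; simpl; rewrite alls_All; auto.
Qed.

Lemma sat_BEx_Ex St sets rho t p :
  sat St sets rho (BEx t p) <-> sat St sets rho (Ex (And (Lt (Var 0) (ren_term S t)) p)).
Proof. simpl; setoid_rewrite teval_ren; simpl; firstorder. Qed.

Lemma sat_BAll_All St sets rho t p :
  sat St sets rho (BAll t p) <-> sat St sets rho (All (Imp (Lt (Var 0) (ren_term S t)) p)).
Proof. simpl; setoid_rewrite teval_ren; simpl; firstorder. Qed.

(* The hierarchy only allows connectives inside Delta_0 formulas, so a Delta_0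
   side condition is attached under the quantifier prefix instead. *)
Fixpoint conj_prefix (c p : form) : form :=
  match p with
  | Ex q => Ex (conj_prefix (shift c) q)
  | All q => All (conj_prefix (shift c) q)
  | _ => And c p
  end.

Fixpoint impl_prefix (c p : form) : form :=
  match p with
  | Ex q => Ex (impl_prefix (shift c) q)
  | All q => All (impl_prefix (shift c) q)
  | _ => Imp c p
  end.

Lemma conj_prefix_sigma : forall k p, is_sigma k p ->
  forall c, delta0 c -> is_sigma k (conj_prefix c p)
with conj_prefix_pi : forall k p, is_pi k p ->
  forall c, delta0 c -> is_pi k (conj_prefix c p).
Proof.
  - intros k p Hp c Hc; destruct Hp as [p Hd | k p Hp | k p Hp].
    + destruct Hd; apply sig_0; constructor; auto; constructor; auto.
    + apply sig_pi, conj_prefix_pi; auto.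
    + apply sig_ex, conj_prefix_sigma, ren_delta0; auto.
  - intros k p Hp c Hc; destruct Hp as [p Hd | k p Hp | k p Hp].
    + destruct Hd; apply pi_0; constructor; auto; constructor; auto.
    + apply pi_sig, conj_prefix_sigma; auto.
    + apply pi_all, conj_prefix_pi, ren_delta0; auto.
Qed.

Lemma impl_prefix_sigma : forall k p, is_sigma k p ->
  forall c, delta0 c -> is_sigma k (impl_prefix c p)
with impl_prefix_pi : forall k p, is_pi k p ->
  forall c, delta0 c -> is_pi k (impl_prefix c p).
Proof.
  - intros k p Hp c Hc; destruct Hp as [p Hd | k p Hp | k p Hp].
    + destruct Hd; apply sig_0; constructor; auto; constructor; auto.
    + apply sig_pi, impl_prefix_pi; auto.
    + apply sig_ex, impl_prefix_sigma, ren_delta0; auto.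
  - intros k p Hp c Hc; destruct Hp as [p Hd | k p Hp | k p Hp].
    + destruct Hd; apply pi_0; constructor; auto; constructor; auto.
    + apply pi_sig, impl_prefix_sigma; auto.
    + apply pi_all, impl_prefix_pi, ren_delta0; auto.
Qed.

Lemma conj_prefix_first_order c p :
  first_order c -> first_order p -> first_order (conj_prefix c p).
Proof.
  revert c; induction p; intros c Hc Hp; simpl in *; auto;
    apply IHp; auto; apply ren_first_order; auto.
Qed.

Lemma impl_prefix_first_order c p :
  first_order c -> first_order p -> first_order (impl_prefix c p).
Proof.
  revert c; induction p; intros c Hc Hp; simpl in *; auto;
    apply IHp; auto; apply ren_first_order; auto.
Qed.

Section PrefixSemantics.
Variables (St : Lstruct) (sets : nat -> dom St -> Prop).
Hypothesis dom_inhabited : exists x, inD St x.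

Lemma sat_conj_prefix p : forall c rho,
  sat St sets rho (conj_prefix c p) <-> sat St sets rho c /\ sat St sets rho p.
Proof.
  destruct dom_inhabited as [x0 Hx0].
  induction p; intros c rho; simpl; try reflexivity;
    setoid_rewrite IHp; setoid_rewrite sat_shift; firstorder.
Qed.

Lemma sat_impl_prefix p : forall c rho,
  sat St sets rho (impl_prefix c p) <-> (sat St sets rho c -> sat St sets rho p).
Proof.
  destruct dom_inhabited as [x0 Hx0].
  induction p; intros c rho; simpl; try reflexivity;
    setoid_rewrite IHp; setoid_rewrite sat_shift; [|firstorder].
  destruct (classic (sat St sets rho c)); firstorder.
Qed.

End PrefixSemantics.

Definition pair_form (z x y : term) : form :=
  Eq (Plus z z) (Plus (Times (Plus x y) (Plus (Plus x y) One)) (Plus x x)).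

Lemma pair_form_delta0 z x y : delta0 (pair_form z x y).
Proof. constructor. Qed.

Lemma pair_form_first_order z x y : first_order (pair_form z x y).
Proof. simpl; auto. Qed.

(* Inside [Ex (Ex _)] the two new variables are the components of variable [d]
   (now at [d + 2]); [split_ren d] puts them at positions [d] and [d + 1]. *)
Definition split_ren (d k : nat) : nat :=
  if k <? d then S (S k) else if k =? d then 1 else if k =? S d then 0 else S k.

Lemma split_ren_lt d k : k < d -> split_ren d k = S (S k).
Proof. intro H; unfold split_ren; destruct (Nat.ltb_spec k d); lia. Qed.

Lemma split_ren_diag d : split_ren d d = 1.
Proof. unfold split_ren; rewrite Nat.ltb_irrefl, Nat.eqb_refl; reflexivity. Qed.

Lemma split_ren_succ d : split_ren d (S d) = 0.
Proof.
  unfold split_ren; destruct (Nat.ltb_spec (S d) d), (Nat.eqb_spec (S d) d); try lia.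
  rewrite Nat.eqb_refl; reflexivity.
Qed.

Lemma split_ren_gt d k : S d < k -> split_ren d k = S k.
Proof.
  intro H; unfold split_ren.
  destruct (Nat.ltb_spec k d), (Nat.eqb_spec k d), (Nat.eqb_spec k (S d)); lia.
Qed.

Definition drop_ren (d k : nat) : nat := if k <? d then k else S k.

Definition split_var (b : bool) (d : nat) (p : form) : form :=
  let c := pair_form (Var (S (S d))) (Var 1) (Var 0) in
  let q := ren_form (split_ren d) p in
  if b then Ex (Ex (conj_prefix c q)) else All (All (impl_prefix c q)).

(* [untuple b N d p] reads variable [d] as the code of an [N]-tuple whose
   components take the places [d], ..., [d + N - 1] in [p], the remaining tail
   code being ignored; [b] selects the existential or the universal reading. *)
Fixpoint untuple (b : bool) (N d : nat) (p : form) : form :=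
  match N with
  | 0 => ren_form (drop_ren d) p
  | S N => split_var b d (untuple b N (S d) p)
  end.

Lemma untuple_sigma k N d p : is_sigma (S k) p -> is_sigma (S k) (untuple true N d p).
Proof.
  revert d; induction N; intros d H; simpl.
  - apply ren_sigma; auto.
  - apply sig_ex, sig_ex, conj_prefix_sigma; auto using ren_sigma, pair_form_delta0.
Qed.

Lemma untuple_pi k N d p : is_pi (S k) p -> is_pi (S k) (untuple false N d p).
Proof.
  revert d; induction N; intros d H; simpl.
  - apply ren_pi; auto.
  - apply pi_all, pi_all, impl_prefix_pi; auto using ren_pi, pair_form_delta0.
Qed.

Lemma untuple_first_order b N d p : first_order p -> first_order (untuple b N d p).
Proof.
  revert d; induction N; intros d H; simpl.
  - apply ren_first_order; auto.
  - destruct b; simpl;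
      auto using conj_prefix_first_order, impl_prefix_first_order, ren_first_order,
        pair_form_first_order.
Qed.

(** * Arithmetic in models of RCA_0 *)

Section Model.
Variable M : model2.
Hypothesis HQ : Q_axioms M.
Hypothesis HI : Sigma01_induction M.
Hypothesis HD : Delta01_comprehension M.
(* Induction and comprehension only apply to set assignments in X, so X must be
   known to be nonempty. *)
Hypothesis X_full : X M (fun _ => True).

Local Notation "a ⊕ b" := (add M a b) (at level 50, left associativity).
Local Notation "a ⊗ b" := (mul M a b) (at level 40, left associativity).
Local Notation "𝟘" := (zero M).
Local Notation "𝟙" := (one M).

Lemma succ_neq_zero x : x ⊕ 𝟙 <> 𝟘.
Proof. apply HQ. Qed.
Lemma succ_inj x y : x ⊕ 𝟙 = y ⊕ 𝟙 -> x = y.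
Proof. apply HQ. Qed.
Lemma zero_or_succ x : x <> 𝟘 -> exists y, x = y ⊕ 𝟙.
Proof. apply HQ. Qed.
Lemma add_zero x : x ⊕ 𝟘 = x.
Proof. apply HQ. Qed.
Lemma add_succ x y : x ⊕ (y ⊕ 𝟙) = (x ⊕ y) ⊕ 𝟙.
Proof. apply HQ. Qed.
Lemma mul_zero x : x ⊗ 𝟘 = 𝟘.
Proof. apply HQ. Qed.
Lemma mul_succ x y : x ⊗ (y ⊕ 𝟙) = x ⊗ y ⊕ x.
Proof. apply HQ. Qed.
Lemma lt_iff x y : lt M x y <-> exists d, y = x ⊕ (d ⊕ 𝟙).
Proof.
  destruct HQ as (_ & _ & _ & _ & _ & _ & _ & H); rewrite H.
  split; intros [d Hd]; exists d; auto.
Qed.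

Lemma sigma1_induction (phi : form) sets e (P : carr M -> Prop) :
  is_sigma 1 phi -> sets_in_X M sets ->
  (forall x, sat (fo_part M) sets (scons x e) phi <-> P x) ->
  P 𝟘 -> (forall x, P x -> P (x ⊕ 𝟙)) -> forall x, P x.
Proof.
  intros Hs HX HP H0 HS x; apply HP.
  apply (HI phi Hs sets e HX); [apply HP; exact H0 |].
  intros y Hy; apply HP, HS, HP, Hy.
Qed.

Ltac solve_delta0 := repeat first [apply pair_form_delta0 | constructor].
Ltac solve_sigma1 := repeat apply sig_ex; apply sig_pi, pi_0; solve_delta0.
Ltac solve_pi1 := repeat apply pi_all; apply pi_sig, sig_0; solve_delta0.

Ltac induction_by phi sets e :=
  match goal with |- forall x, @?P x =>
    apply (sigma1_induction phi sets e P); [solve_sigma1 | | | |] end.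
Ltac arith_induction phi e :=
  induction_by phi (fun (_ : nat) (_ : carr M) => True) e;
    [intro; exact X_full | intro; simpl; firstorder | |].

Lemma add_0_l x : 𝟘 ⊕ x = x.
Proof.
  revert x; arith_induction (Eq (Plus Zero (Var 0)) (Var 0)) (fun _ : nat => 𝟘).
  - apply add_zero.
  - intros x H; rewrite add_succ, H; reflexivity.
Qed.

Lemma add_succ_l y x : (y ⊕ 𝟙) ⊕ x = (y ⊕ x) ⊕ 𝟙.
Proof.
  revert x; arith_induction
    (Eq (Plus (Plus (Var 1) One) (Var 0)) (Plus (Plus (Var 1) (Var 0)) One))
    (fun _ : nat => y).
  - rewrite !add_zero; reflexivity.
  - intros x H; rewrite !add_succ, H; reflexivity.
Qed.

Lemma add_comm x y : x ⊕ y = y ⊕ x.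
Proof.
  revert x; arith_induction (Eq (Plus (Var 0) (Var 1)) (Plus (Var 1) (Var 0)))
    (fun _ : nat => y).
  - rewrite add_0_l, add_zero; reflexivity.
  - intros x H; rewrite add_succ_l, add_succ, H; reflexivity.
Qed.

Lemma add_assoc x y z : (x ⊕ y) ⊕ z = x ⊕ (y ⊕ z).
Proof.
  revert z; arith_induction
    (Eq (Plus (Plus (Var 1) (Var 2)) (Var 0)) (Plus (Var 1) (Plus (Var 2) (Var 0))))
    (scons x (fun _ : nat => y)).
  - rewrite !add_zero; reflexivity.
  - intros z H; rewrite !add_succ, H; reflexivity.
Qed.

Lemma mul_0_l x : 𝟘 ⊗ x = 𝟘.
Proof.
  revert x; arith_induction (Eq (Times Zero (Var 0)) Zero) (fun _ : nat => 𝟘).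
  - apply mul_zero.
  - intros x H; rewrite mul_succ, H, add_zero; reflexivity.
Qed.

Lemma mul_add_distr_l x y z : x ⊗ (y ⊕ z) = x ⊗ y ⊕ x ⊗ z.
Proof.
  revert z; arith_induction
    (Eq (Times (Var 1) (Plus (Var 2) (Var 0)))
        (Plus (Times (Var 1) (Var 2)) (Times (Var 1) (Var 0))))
    (scons x (fun _ : nat => y)).
  - rewrite add_zero, mul_zero, add_zero; reflexivity.
  - intros z H; rewrite add_succ, !mul_succ, H, add_assoc; reflexivity.
Qed.

Lemma mul_succ_l x y : (x ⊕ 𝟙) ⊗ y = x ⊗ y ⊕ y.
Proof.
  revert y; arith_induction
    (Eq (Times (Plus (Var 1) One) (Var 0)) (Plus (Times (Var 1) (Var 0)) (Var 0)))
    (fun _ : nat => x).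
  - rewrite !mul_zero, add_zero; reflexivity.
  - intros y H; rewrite !mul_succ, H, !add_assoc, !add_succ, (add_comm x y); reflexivity.
Qed.

Lemma mul_comm x y : x ⊗ y = y ⊗ x.
Proof.
  revert y; arith_induction (Eq (Times (Var 1) (Var 0)) (Times (Var 0) (Var 1)))
    (fun _ : nat => x).
  - rewrite mul_zero, mul_0_l; reflexivity.
  - intros y H; rewrite mul_succ, mul_succ_l, H; reflexivity.
Qed.

Lemma mul_assoc x y z : (x ⊗ y) ⊗ z = x ⊗ (y ⊗ z).
Proof.
  revert z; arith_induction
    (Eq (Times (Times (Var 1) (Var 2)) (Var 0)) (Times (Var 1) (Times (Var 2) (Var 0))))
    (scons x (fun _ : nat => y)).
  - rewrite !mul_zero; reflexivity.
  - intros z H; rewrite !mul_succ, H, mul_add_distr_l; reflexivity.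
Qed.

Lemma mul_1_l x : 𝟙 ⊗ x = x.
Proof. rewrite <- (add_0_l 𝟙), mul_succ_l, mul_0_l, add_0_l; reflexivity. Qed.

Lemma model_semiring : semi_ring_theory 𝟘 𝟙 (add M) (mul M) (@eq (carr M)).
Proof.
  constructor; intros; rewrite ?add_assoc, ?mul_assoc; auto using
    add_0_l, add_comm, mul_1_l, mul_0_l, mul_comm.
  rewrite mul_comm, mul_add_distr_l, (mul_comm p), (mul_comm p); reflexivity.
Qed.

Add Ring model_ring : model_semiring.

Lemma add_cancel_r a b c : a ⊕ c = b ⊕ c -> a = b.
Proof.
  revert c; arith_induction
    (Imp (Eq (Plus (Var 1) (Var 0)) (Plus (Var 2) (Var 0))) (Eq (Var 1) (Var 2)))
    (scons a (fun _ : nat => b)).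
  - rewrite !add_zero; auto.
  - intros c H E; apply H, succ_inj; rewrite <- !add_succ; exact E.
Qed.

Lemma add_cancel_l a b c : c ⊕ a = c ⊕ b -> a = b.
Proof. rewrite (add_comm c a), (add_comm c b); apply add_cancel_r. Qed.

Lemma neq_add_succ a d : a <> a ⊕ (d ⊕ 𝟙).
Proof.
  intro H; apply (succ_neq_zero d), (add_cancel_l _ _ a).
  rewrite add_zero; symmetry; exact H.
Qed.

Lemma trichotomy a b :
  a = b \/ (exists d, b = a ⊕ (d ⊕ 𝟙)) \/ (exists d, a = b ⊕ (d ⊕ 𝟙)).
Proof.
  enough (H : forall a, exists d, a = b \/ b = a ⊕ (d ⊕ 𝟙) \/ a = b ⊕ (d ⊕ 𝟙))
    by (destruct (H a) as [d [E | [E | E]]]; eauto).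
  arith_induction
    (Ex (Or (Eq (Var 1) (Var 2)) (Or (Eq (Var 2) (Plus (Var 1) (Plus (Var 0) One)))
        (Eq (Var 1) (Plus (Var 2) (Plus (Var 0) One))))))
    (fun _ : nat => b).
  - destruct (classic (b = 𝟘)) as [E | E].
    + exists 𝟘; left; auto.
    + destruct (zero_or_succ _ E) as [y Hy]; exists y; right; left; rewrite Hy; ring.
  - intros x [d [H | [H | H]]].
    + exists 𝟘; right; right; subst; ring.
    + destruct (classic (d = 𝟘)) as [E | E].
      * exists 𝟘; left; subst; ring.
      * destruct (zero_or_succ _ E) as [y Hy]; exists y; right; left; subst; ring.
    + exists (d ⊕ 𝟙); right; right; subst; ring.
Qed.

Lemma not_lt_zero a : ~ lt M a 𝟘.
Proof.
  rewrite lt_iff; intros [d H]; apply (succ_neq_zero (a ⊕ d)).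
  rewrite <- add_succ; auto.
Qed.

Lemma lt_succ_inv y x : lt M y (x ⊕ 𝟙) -> lt M y x \/ y = x.
Proof.
  rewrite !lt_iff; intros [d H]; rewrite add_succ in H; apply succ_inj in H.
  destruct (classic (d = 𝟘)) as [E | E].
  - right; subst; ring.
  - destruct (zero_or_succ _ E) as [z Hz]; left; exists z; subst; ring.
Qed.

Lemma lt_succ_diag x : lt M x (x ⊕ 𝟙).
Proof. rewrite lt_iff; exists 𝟘; ring. Qed.

Lemma least_element (A : carr M -> Prop) : X M A -> (exists y, A y) ->
  exists y, A y /\ forall y', lt M y' y -> ~ A y'.
Proof.
  intros HA [y0 Hy0]; apply NNPP; intro Hnone.
  enough (H : forall x y, lt M y x -> ~ A y) by exact (H _ _ (lt_succ_diag y0) Hy0).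
  induction_by (BAll (Var 0) (Not (Mem (Var 0) 0))) (fun (_ : nat) => A)
    (fun _ : nat => 𝟘); [intro; exact HA | intro; simpl; firstorder | |].
  - intros y H; contradiction (not_lt_zero y).
  - intros x IH y Hy Ay; destruct (lt_succ_inv _ _ Hy) as [H | ->]; [eapply IH; eauto |].
    apply Hnone; exists x; split; auto.
Qed.

(** * Cantor pairing *)

Lemma pronic_even s : exists t, s ⊗ (s ⊕ 𝟙) = t ⊕ t.
Proof.
  revert s; arith_induction
    (Ex (Eq (Times (Var 1) (Plus (Var 1) One)) (Plus (Var 0) (Var 0)))) (fun _ : nat => 𝟘).
  - exists 𝟘; ring.
  - intros s [t H]; exists (t ⊕ s ⊕ 𝟙).
    transitivity (s ⊗ (s ⊕ 𝟙) ⊕ (s ⊕ 𝟙) ⊕ (s ⊕ 𝟙)); [ring |]; rewrite H; ring.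
Qed.

Lemma pair_rel_exists x y : exists z, pair_rel M z x y.
Proof.
  destruct (pronic_even (x ⊕ y)) as [t H]; exists (t ⊕ x).
  unfold pair_rel; rewrite H; ring.
Qed.

Lemma double_inj a b : a ⊕ a = b ⊕ b -> a = b.
Proof.
  intro H; destruct (trichotomy a b) as [E | [[d E] | [d E]]]; auto; exfalso; subst.
  - apply (neq_add_succ (a ⊕ a) (d ⊕ d ⊕ 𝟙)); rewrite H at 1; ring.
  - apply (neq_add_succ (b ⊕ b) (d ⊕ d ⊕ 𝟙)); rewrite <- H at 1; ring.
Qed.

Lemma pair_rel_functional c c' x y : pair_rel M c x y -> pair_rel M c' x y -> c = c'.
Proof. unfold pair_rel; intros H H'; apply double_inj; congruence. Qed.

(* A code on a later diagonal is larger; the explicit terms below are the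
   differences. *)
Lemma pair_rel_injective c x y x' y' :
  pair_rel M c x y -> pair_rel M c x' y' -> x = x' /\ y = y'.
Proof.
  unfold pair_rel; intros H H'.
  destruct (trichotomy (x ⊕ y) (x' ⊕ y')) as [E | [[d E] | [d E]]].
  - rewrite <- E in H'; rewrite H' in H; apply add_cancel_l, double_inj in H; subst x'.
    split; auto; eapply add_cancel_l; eauto.
  - exfalso; rewrite E in H'.
    apply (neq_add_succ (c ⊕ c)
      ((x ⊕ y) ⊗ d ⊕ (x ⊕ y) ⊗ d ⊕ y ⊕ y ⊕ d ⊗ d ⊕ d ⊕ d ⊕ d ⊕ 𝟙 ⊕ x' ⊕ x')).
    rewrite H' at 1; rewrite H; ring.
  - exfalso; rewrite E in H.
    apply (neq_add_succ (c ⊕ c)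
      ((x' ⊕ y') ⊗ d ⊕ (x' ⊕ y') ⊗ d ⊕ y' ⊕ y' ⊕ d ⊗ d ⊕ d ⊕ d ⊕ d ⊕ 𝟙 ⊕ x ⊕ x)).
    rewrite H at 1; rewrite H'; ring.
Qed.

Lemma pair_rel_surjective c : exists x y, pair_rel M c x y.
Proof.
  revert c; arith_induction
    (Ex (Ex (Eq (Plus (Var 2) (Var 2))
       (Plus (Times (Plus (Var 1) (Var 0)) (Plus (Plus (Var 1) (Var 0)) One))
             (Plus (Var 1) (Var 1))))))
    (fun _ : nat => 𝟘).
  - exists 𝟘, 𝟘; unfold pair_rel; ring.
  - intros c [x [y H]]; unfold pair_rel in *.
    destruct (classic (y = 𝟘)) as [-> | E].
    + exists 𝟘, (x ⊕ 𝟙); transitivity (c ⊕ c ⊕ 𝟙 ⊕ 𝟙); [ring |]; rewrite H; ring.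
    + destruct (zero_or_succ _ E) as [y' ->]; exists (x ⊕ 𝟙), y'.
      transitivity (c ⊕ c ⊕ 𝟙 ⊕ 𝟙); [ring |]; rewrite H; ring.
Qed.

Lemma pair_rel_lt_r w w' i y y' :
  pair_rel M w' i y' -> pair_rel M w i y -> lt M y' y -> lt M w' w.
Proof.
  unfold pair_rel; intros H' H Hlt; apply lt_iff in Hlt as [d ->].
  set (K := (i ⊕ y') ⊗ d ⊕ (i ⊕ y') ⊗ d ⊕ (i ⊕ y') ⊕ (i ⊕ y') ⊕ d ⊗ d ⊕ d ⊕ d ⊕ d ⊕ 𝟙).
  assert (E : w ⊕ w = (w' ⊕ w') ⊕ (K ⊕ 𝟙)) by (rewrite H, H'; unfold K; ring).
  apply lt_iff; destruct (trichotomy w' w) as [<- | [[d' E'] | [d' E']]]; eauto; exfalso.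
  - exact (neq_add_succ _ _ E).
  - subst w'; apply (neq_add_succ (w ⊕ w) (d' ⊕ d' ⊕ 𝟙 ⊕ 𝟙 ⊕ K)).
    rewrite E at 1; unfold K; ring.
Qed.

Definition cpair (x y : carr M) : carr M :=
  proj1_sig (constructive_indefinite_description _ (pair_rel_exists x y)).

Lemma cpair_spec x y : pair_rel M (cpair x y) x y.
Proof.
  exact (proj2_sig (constructive_indefinite_description _ (pair_rel_exists x y))).
Qed.

Lemma unpair_exists c : exists p : carr M * carr M, pair_rel M c (fst p) (snd p).
Proof. destruct (pair_rel_surjective c) as [x [y H]]; exists (x, y); auto. Qed.

Definition unpair (c : carr M) : carr M * carr M :=
  proj1_sig (constructive_indefinite_description _ (unpair_exists c)).
Definition cfst (c : carr M) : carr M := fst (unpair c).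
Definition csnd (c : carr M) : carr M := snd (unpair c).

Lemma unpair_spec c : pair_rel M c (cfst c) (csnd c).
Proof. exact (proj2_sig (constructive_indefinite_description _ (unpair_exists c))). Qed.

Lemma cfst_cpair x y : cfst (cpair x y) = x.
Proof. apply (pair_rel_injective _ _ _ _ _ (unpair_spec _) (cpair_spec x y)). Qed.

Lemma csnd_cpair x y : csnd (cpair x y) = y.
Proof. apply (pair_rel_injective _ _ _ _ _ (unpair_spec _) (cpair_spec x y)). Qed.

Lemma cpair_cfst_csnd c : cpair (cfst c) (csnd c) = c.
Proof. exact (pair_rel_functional _ _ _ _ (cpair_spec _ _) (unpair_spec c)). Qed.

Lemma pair_rel_iff c x y : pair_rel M c x y <-> x = cfst c /\ y = csnd c.
Proof.
  split.
  - intro H; exact (pair_rel_injective _ _ _ _ _ H (unpair_spec c)).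
  - intros [-> ->]; apply unpair_spec.
Qed.

Fixpoint decode (N : nat) (c : carr M) (e : nat -> carr M) : nat -> carr M :=
  match N with 0 => e | S N => scons (cfst c) (decode N (csnd c) e) end.

Definition decode_at (N d : nat) (rho : nat -> carr M) : nat -> carr M :=
  fun k => if k <? d then rho k else decode N (rho d) (fun j => rho (S (d + j))) (k - d).

Lemma fo_part_inhabited : exists x, inD (fo_part M) x.
Proof. exists 𝟘; exact I. Qed.

Lemma sat_pair_form sets rho a b c :
  sat (fo_part M) sets rho (pair_form a b c) <->
  pair_rel M (teval (fo_part M) rho a) (teval (fo_part M) rho b) (teval (fo_part M) rho c).
Proof. reflexivity. Qed.

Lemma sat_split_var sets b d p rho :
  sat (fo_part M) sets rho (split_var b d p) <->
  sat (fo_part M) sets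
    (fun k => scons (csnd (rho d)) (scons (cfst (rho d)) rho) (split_ren d k)) p.
Proof.
  destruct b; simpl;
    [setoid_rewrite sat_conj_prefix | setoid_rewrite sat_impl_prefix];
    try apply fo_part_inhabited;
    setoid_rewrite sat_pair_form; setoid_rewrite sat_ren; simpl;
    setoid_rewrite pair_rel_iff.
  - split; [intros (a & _ & b & _ & [-> ->] & H); exact H |].
    intro H; exists (cfst (rho d)); split; [exact I |].
    exists (csnd (rho d)); split; [exact I | auto].
  - split; [intro H; exact (H _ I _ I (conj eq_refl eq_refl)) |].
    intros H a _ b _ [-> ->]; exact H.
Qed.

Lemma decode_at_split N d rho :
  decode_at N (S d)
    (fun k => scons (csnd (rho d)) (scons (cfst (rho d)) rho) (split_ren d k)) =
  decode_at (S N) d rho.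
Proof.
  apply functional_extensionality; intro k; unfold decode_at.
  destruct (Nat.ltb_spec k (S d)), (Nat.ltb_spec k d); try lia.
  - rewrite split_ren_lt; auto.
  - replace k with d by lia; rewrite split_ren_diag, Nat.sub_diag; reflexivity.
  - rewrite split_ren_succ; replace (k - d) with (S (k - S d)) by lia.
    cbn [decode scons].
    f_equal; apply functional_extensionality; intro j.
    rewrite split_ren_gt by lia; reflexivity.
Qed.

Lemma sat_untuple sets b N : forall d p rho,
  sat (fo_part M) sets rho (untuple b N d p) <->
  sat (fo_part M) sets (decode_at N d rho) p.
Proof.
  induction N as [|N IH]; intros d p rho; simpl.
  - rewrite sat_ren.
    enough (E : (fun k => rho (drop_ren d k)) = decode_at 0 d rho)
      by (rewrite E; reflexivity).
    apply functional_extensionality; intro k; unfold decode_at, drop_ren.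
    destruct (Nat.ltb_spec k d); simpl; [reflexivity |]; f_equal; lia.
  - rewrite sat_split_var, IH, decode_at_split; reflexivity.
Qed.

Lemma sat_untuple_decode sets b N p c e :
  sat (fo_part M) sets (scons c e) (untuple b N 0 p) <->
  sat (fo_part M) sets (decode N c e) p.
Proof.
  rewrite sat_untuple.
  enough (E : decode_at N 0 (scons c e) = decode N c e) by (rewrite E; reflexivity).
  apply functional_extensionality; intro k; unfold decode_at; simpl.
  rewrite Nat.sub_0_r; reflexivity.
Qed.

Definition full_sets : nat -> carr M -> Prop := fun _ _ => True.
Definition two_sets (A B : carr M -> Prop) : nat -> carr M -> Prop :=
  fun k => match k with 0 => A | _ => B end.

Lemma full_sets_in_X : sets_in_X M full_sets.
Proof. intro; exact X_full. Qed.

Lemma two_sets_in_X A B : X M A -> X M B -> sets_in_X M (two_sets A B).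
Proof. intros HA HB [|k]; auto. Qed.

Definition graph (f : carr M -> carr M) : carr M -> Prop :=
  fun z => exists i, pair_rel M z i (f i).

Lemma graph_iff f z : graph f z <-> csnd z = f (cfst z).
Proof.
  unfold graph; setoid_rewrite pair_rel_iff; split.
  - intros (i & -> & ->); reflexivity.
  - intro H; exists (cfst z); auto.
Qed.

Ltac witness x := exists x; split; [exact I |].

Ltac sat_simpl := simpl; repeat setoid_rewrite pair_rel_iff; repeat setoid_rewrite graph_iff.

Lemma X_delta1 (phi psi : form) sets e (P : carr M -> Prop) :
  is_sigma 1 phi -> is_pi 1 psi -> sets_in_X M sets ->
  (forall x, sat (fo_part M) sets (scons x e) phi <-> P x) ->
  (forall x, sat (fo_part M) sets (scons x e) psi <-> P x) -> X M P.
Proof.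
  intros Hphi Hpsi Hsets E1 E2.
  replace P with (fun x => sat (fo_part M) sets (scons x e) phi)
    by (apply functional_extensionality; intro x;
        apply propositional_extensionality; apply E1).
  apply (HD phi psi); auto; intro x; rewrite E1, E2; reflexivity.
Qed.

Lemma X_delta0 (phi : form) sets e (P : carr M -> Prop) :
  delta0 phi -> sets_in_X M sets ->
  (forall x, sat (fo_part M) sets (scons x e) phi <-> P x) -> X M P.
Proof.
  intros H Hsets E; apply (X_delta1 phi phi sets e);
    auto using sig_pi, pi_0, pi_sig, sig_0.
Qed.

Lemma sat_split_var0 sets b p z e :
  sat (fo_part M) sets (scons z e) (split_var b 0 p) <->
  sat (fo_part M) sets (scons (cfst z) (scons (csnd z) e)) p.
Proof.
  rewrite sat_split_var.
  enough (E : (fun k => scons (csnd (scons z e 0)) (scons (cfst (scons z e 0)) (scons z e))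
                           (split_ren 0 k)) =
              scons (cfst z) (scons (csnd z) e)) by (rewrite E; reflexivity).
  apply functional_extensionality; intros [|[|k]];
    [rewrite split_ren_diag | rewrite split_ren_succ | rewrite split_ren_gt by lia];
    reflexivity.
Qed.

Lemma X_pairs_delta1 (phi psi : form) sets e (R : carr M -> carr M -> Prop) :
  is_sigma 1 phi -> is_pi 1 psi -> sets_in_X M sets ->
  (forall x y, sat (fo_part M) sets (scons x (scons y e)) phi <-> R x y) ->
  (forall x y, sat (fo_part M) sets (scons x (scons y e)) psi <-> R x y) ->
  X M (fun z => R (cfst z) (csnd z)).
Proof.
  intros Hphi Hpsi Hsets E1 E2.
  apply (X_delta1 (split_var true 0 phi) (split_var false 0 psi) sets e); auto.
  - apply sig_ex, sig_ex, conj_prefix_sigma; auto using ren_sigma, pair_form_delta0.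
  - apply pi_all, pi_all, impl_prefix_pi; auto using ren_pi, pair_form_delta0.
  - intro z; rewrite sat_split_var0; apply E1.
  - intro z; rewrite sat_split_var0; apply E2.
Qed.

Lemma X_fun_delta1 (phi psi : form) sets e (f : carr M -> carr M) :
  is_sigma 1 phi -> is_pi 1 psi -> sets_in_X M sets ->
  (forall i y, sat (fo_part M) sets (scons i (scons y e)) phi <-> y = f i) ->
  (forall i y, sat (fo_part M) sets (scons i (scons y e)) psi <-> y = f i) ->
  fun_in_X M f.
Proof.
  intros Hphi Hpsi Hsets E1 E2; unfold fun_in_X.
  replace (fun z => exists i, pair_rel M z i (f i)) with (fun z => csnd z = f (cfst z))
    by (apply functional_extensionality; intro z; apply propositional_extensionality;
        symmetry; apply graph_iff).
  exact (X_pairs_delta1 phi psi sets e (fun i y => y = f i) Hphi Hpsi Hsets E1 E2).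
Qed.

Lemma X_fun_delta0 (phi : form) sets e (f : carr M -> carr M) :
  delta0 phi -> sets_in_X M sets ->
  (forall i y, sat (fo_part M) sets (scons i (scons y e)) phi <-> y = f i) ->
  fun_in_X M f.
Proof.
  intros H Hsets E; apply (X_fun_delta1 phi phi sets e);
    auto using sig_pi, pi_0, pi_sig, sig_0.
Qed.

Lemma X_compl A : X M A -> X M (fun x => ~ A x).
Proof.
  intro HA; apply (X_delta0 (Not (Mem (Var 0) 0)) (two_sets A A) (fun _ => 𝟘));
    [solve_delta0 | auto using two_sets_in_X | intro; reflexivity].
Qed.

Lemma X_or A B : X M A -> X M B -> X M (fun x => A x \/ B x).
Proof.
  intros HA HB; apply (X_delta0 (Or (Mem (Var 0) 0) (Mem (Var 0) 1)) (two_sets A B)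
    (fun _ => 𝟘)); [solve_delta0 | auto using two_sets_in_X | intro; reflexivity].
Qed.

Lemma X_and A B : X M A -> X M B -> X M (fun x => A x /\ B x).
Proof.
  intros HA HB; apply (X_delta0 (And (Mem (Var 0) 0) (Mem (Var 0) 1)) (two_sets A B)
    (fun _ => 𝟘)); [solve_delta0 | auto using two_sets_in_X | intro; reflexivity].
Qed.

Lemma X_imp A B : X M A -> X M B -> X M (fun x => A x -> B x).
Proof.
  intros HA HB; apply (X_delta0 (Imp (Mem (Var 0) 0) (Mem (Var 0) 1)) (two_sets A B)
    (fun _ => 𝟘)); [solve_delta0 | auto using two_sets_in_X | intro; reflexivity].
Qed.

Lemma X_const m : fun_in_X M (fun _ => m).
Proof.
  apply (X_fun_delta0 (Eq (Var 1) (Var 2)) full_sets (fun _ => m));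
    [solve_delta0 | apply full_sets_in_X | intros; reflexivity].
Qed.

Lemma X_id : fun_in_X M (fun i => i).
Proof.
  apply (X_fun_delta0 (Eq (Var 1) (Var 0)) full_sets (fun _ => 𝟘));
    [solve_delta0 | apply full_sets_in_X | intros; reflexivity].
Qed.

Lemma X_cfst : fun_in_X M cfst.
Proof.
  apply (X_fun_delta1 (Ex (pair_form (Var 1) (Var 2) (Var 0)))
    (All (All (Imp (pair_form (Var 2) (Var 1) (Var 0)) (Eq (Var 3) (Var 1)))))
    full_sets (fun _ => 𝟘)); auto using full_sets_in_X; try solve [solve_sigma1 | solve_pi1];
    intros i y; sat_simpl.
  - split; [intros (b & _ & H & _); exact H | intro H; witness (csnd i); auto].
  - split; [intro H; exact (H _ I _ I (conj eq_refl eq_refl)) |].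
    intros H a _ b _ [-> _]; exact H.
Qed.

Lemma X_csnd : fun_in_X M csnd.
Proof.
  apply (X_fun_delta1 (Ex (pair_form (Var 1) (Var 0) (Var 2)))
    (All (All (Imp (pair_form (Var 2) (Var 1) (Var 0)) (Eq (Var 3) (Var 0)))))
    full_sets (fun _ => 𝟘)); auto using full_sets_in_X; try solve [solve_sigma1 | solve_pi1];
    intros i y; sat_simpl.
  - split; [intros (a & _ & _ & H); exact H | intro H; witness (cfst i); auto].
  - split; [intro H; exact (H _ I _ I (conj eq_refl eq_refl)) |].
    intros H a _ b _ [_ ->]; exact H.
Qed.

Lemma X_comp f g : fun_in_X M f -> fun_in_X M g -> fun_in_X M (fun i => g (f i)).
Proof.
  intros Hf Hg.
  apply (X_fun_delta1
    (Ex (Ex (Ex (And (Mem (Var 1) 0) (And (pair_form (Var 1) (Var 3) (Var 2))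
       (And (Mem (Var 0) 1) (pair_form (Var 0) (Var 2) (Var 4))))))))
    (All (All (All (Imp (And (Mem (Var 1) 0) (And (pair_form (Var 1) (Var 3) (Var 2))
       (pair_form (Var 0) (Var 2) (Var 4)))) (Mem (Var 0) 1)))))
    (two_sets (graph f) (graph g)) (fun _ => 𝟘)); auto using two_sets_in_X;
    try solve [solve_sigma1 | solve_pi1]; intros i y; sat_simpl.
  - split.
    + intros (u & _ & w & _ & v & _ & Hw & [Hi Hu] & Hv & Hu' & ->).
      rewrite Hv, <- Hu', Hu, Hw, <- Hi; reflexivity.
    + intros ->; witness (f i); witness (cpair i (f i)); witness (cpair (f i) (g (f i))).
      rewrite !cfst_cpair, !csnd_cpair; auto.
  - split.
    + intro H; assert (Hc := H (f i) I (cpair i (f i)) I (cpair (f i) y) I).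
      rewrite !cfst_cpair, !csnd_cpair in Hc; auto.
    + intros -> u _ w _ v _ (Hw & [Hi Hu] & Hu' & Hy); congruence.
Qed.

Lemma X_cpair f g : fun_in_X M f -> fun_in_X M g -> fun_in_X M (fun i => cpair (f i) (g i)).
Proof.
  intros Hf Hg.
  apply (X_fun_delta1
    (Ex (Ex (Ex (Ex (And (pair_form (Var 5) (Var 3) (Var 2)) (And (Mem (Var 1) 0)
       (And (pair_form (Var 1) (Var 4) (Var 3)) (And (Mem (Var 0) 1)
       (pair_form (Var 0) (Var 4) (Var 2))))))))))
    (All (All (All (All (Imp (And (pair_form (Var 5) (Var 3) (Var 2))
       (And (pair_form (Var 1) (Var 4) (Var 3)) (pair_form (Var 0) (Var 4) (Var 2))))
       (And (Mem (Var 1) 0) (Mem (Var 0) 1)))))))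
    (two_sets (graph f) (graph g)) (fun _ => 𝟘)); auto using two_sets_in_X;
    try solve [solve_sigma1 | solve_pi1]; intros i y; sat_simpl.
  - split.
    + intros (a & _ & b & _ & w & _ & v & _ & [Ha Hb] & Hw & [Hi Ha'] & Hv & Hi' & Hb').
      rewrite <- (cpair_cfst_csnd y); congruence.
    + intros ->; witness (f i); witness (g i); witness (cpair i (f i));
        witness (cpair i (g i)); rewrite !cfst_cpair, !csnd_cpair; auto 10.
  - split.
    + intro H; destruct (H (cfst y) I (csnd y) I (cpair i (cfst y)) I (cpair i (csnd y)) I)
        as [H1 H2]; rewrite ?cfst_cpair, ?csnd_cpair in *; auto.
      rewrite <- (cpair_cfst_csnd y); congruence.
    + intros -> a _ b _ w _ v _ ([Ha Hb] & [Hi Ha'] & Hi' & Hb').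
      rewrite cfst_cpair in Ha; rewrite csnd_cpair in Hb; split; congruence.
Qed.

Lemma X_preim S W : X M S -> fun_in_X M W -> X M (fun i => S (W i)).
Proof.
  intros HS HW.
  apply (X_delta1
    (Ex (Ex (And (Mem (Var 0) 0) (And (pair_form (Var 0) (Var 2) (Var 1)) (Mem (Var 1) 1)))))
    (All (All (Imp (And (Mem (Var 0) 0) (pair_form (Var 0) (Var 2) (Var 1))) (Mem (Var 1) 1))))
    (two_sets (graph W) S) (fun _ => 𝟘)); auto using two_sets_in_X;
    try solve [solve_sigma1 | solve_pi1]; intros i; sat_simpl.
  - split.
    + intros (y & _ & w & _ & Hw & [Hi Hy] & HSy); congruence.
    + intro H; witness (W i); witness (cpair i (W i)); rewrite cfst_cpair, csnd_cpair; auto.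
  - split.
    + intro H; apply (H (W i) I (cpair i (W i)) I); rewrite cfst_cpair, csnd_cpair; auto.
    + intros H y _ w _ (Hw & Hi & Hy); congruence.
Qed.

Definition least_witness (Q : carr M -> Prop) (i y : carr M) : Prop :=
  Q (cpair i y) /\ forall y', lt M y' y -> ~ Q (cpair i y').

Lemma least_witness_exists Q i : X M Q -> (exists y, Q (cpair i y)) ->
  exists y, least_witness Q i y.
Proof.
  intros HQX Hex; apply least_element; auto.
  apply (X_preim Q (fun y => cpair i y)); auto using X_cpair, X_const, X_id.
Qed.

Lemma least_witness_unique Q i y y' :
  least_witness Q i y -> least_witness Q i y' -> y = y'.
Proof.
  intros [H1 H2] [H1' H2'].
  destruct (trichotomy y y') as [E | [[d E] | [d E]]]; auto; exfalso.
  - apply (H2' y); auto; apply lt_iff; eauto.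
  - apply (H2 y'); auto; apply lt_iff; eauto.
Qed.

(* Below the code of (i, y) lie the codes of all (i, y') with y' < y. *)
Lemma least_witness_bounded Q i y :
  (forall y', True -> lt M y' y -> forall w', True -> lt M w' (cpair i y) ->
     pair_rel M w' i y' -> ~ Q w') <-> (forall y', lt M y' y -> ~ Q (cpair i y')).
Proof.
  split.
  - intros H y' Hy'; apply (H y' I Hy' _ I); [| apply cpair_spec].
    exact (pair_rel_lt_r _ _ i _ _ (cpair_spec i y') (cpair_spec i y) Hy').
  - intros H y' _ Hy' w' _ _ Hw'.
    rewrite (pair_rel_functional _ _ _ _ Hw' (cpair_spec i y')); auto.
Qed.

Lemma X_least_witness_fun Q h : X M Q ->
  (forall i y, least_witness Q i y <-> y = h i) -> fun_in_X M h.
Proof.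
  intros HQX Hh.
  apply (X_fun_delta1
    (Ex (And (pair_form (Var 0) (Var 1) (Var 2)) (And (Mem (Var 0) 0)
       (BAll (Var 2) (BAll (Var 1) (Imp (pair_form (Var 0) (Var 3) (Var 1))
          (Not (Mem (Var 0) 0))))))))
    (All (Imp (pair_form (Var 0) (Var 1) (Var 2)) (And (Mem (Var 0) 0)
       (BAll (Var 2) (BAll (Var 1) (Imp (pair_form (Var 0) (Var 3) (Var 1))
          (Not (Mem (Var 0) 0))))))))
    (two_sets Q Q) (fun _ => 𝟘)); auto using two_sets_in_X;
    try solve [solve_sigma1 | solve_pi1];
    intros i y; rewrite <- (Hh i y); unfold least_witness; simpl.
  - split.
    + intros (w & _ & Hw & HQw & Hb).
      rewrite (pair_rel_functional _ _ _ _ Hw (cpair_spec i y)) in HQw, Hb.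
      split; auto; apply least_witness_bounded; auto.
    + intros [HQy Hmin]; witness (cpair i y).
      split; [apply cpair_spec | split; auto]; apply least_witness_bounded; auto.
  - split.
    + intro H; destruct (H _ I (cpair_spec i y)) as [HQy Hb].
      split; auto; apply least_witness_bounded; auto.
    + intros [HQy Hmin] w _ Hw; rewrite (pair_rel_functional _ _ _ _ Hw (cpair_spec i y)).
      split; auto; apply least_witness_bounded; auto.
Qed.

Lemma least_witness_function Q : X M Q -> (forall i, exists y, Q (cpair i y)) ->
  exists h, fun_in_X M h /\ forall i, Q (cpair i (h i)).
Proof.
  intros HQX Hex.
  assert (Hleast : forall i, exists y, least_witness Q i y)
    by (intro i; apply least_witness_exists; auto).
  set (h i := proj1_sig (constructive_indefinite_description _ (Hleast i))).
  assert (Hh : forall i, least_witness Q i (h i))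
    by (intro i; exact (proj2_sig (constructive_indefinite_description _ (Hleast i)))).
  exists h; split; [| intro i; apply Hh].
  apply (X_least_witness_fun Q h HQX); intros i y; split.
  - intro H; exact (least_witness_unique _ _ _ _ H (Hh i)).
  - intros ->; apply Hh.
Qed.

Fixpoint append_code (m : nat) (v w : carr M) : carr M :=
  match m with 0 => w | S m => cpair (cfst v) (append_code m (csnd v) w) end.

Lemma decode_append m : forall N v w e,
  decode (m + N) (append_code m v w) e = decode m v (decode N w e).
Proof.
  induction m as [|m IH]; intros N v w e; simpl; auto.
  rewrite cfst_cpair, csnd_cpair, IH; reflexivity.
Qed.

Lemma X_append m : forall V W, fun_in_X M V -> fun_in_X M W ->
  fun_in_X M (fun i => append_code m (V i) (W i)).
Proof.
  induction m as [|m IH]; intros V W HV HW; simpl; auto.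
  apply X_cpair; [apply X_comp; auto using X_cfst |].
  apply (IH (fun i => csnd (V i))); auto using X_comp, X_csnd.
Qed.

Definition definable_on_codes (P : (nat -> carr M) -> Prop) : Prop :=
  forall N e, X M (fun c => P (decode N c e)).

(* The environments for which Łoś's theorem is proved: finitely many variables
   vary with [i], through one function in X coding their tuple; the others are
   constant. *)
Definition X_family (rho : carr M -> nat -> carr M) : Prop :=
  exists N W e, fun_in_X M W /\ forall i, rho i = decode N (W i) e.

Lemma definable_compl P : definable_on_codes P -> definable_on_codes (fun rho => ~ P rho).
Proof. intros HP N e; apply X_compl, HP. Qed.

Definition definable (p : form) : Prop :=
  definable_on_codes (fun rho => sat (fo_part M) nosets rho p).

Lemma definable_equiv p q : (forall rho, sat (fo_part M) nosets rho p <->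
  sat (fo_part M) nosets rho q) -> definable p -> definable q.
Proof.
  intros E Dp N e.
  replace (fun c => sat (fo_part M) nosets (decode N c e) q)
    with (fun c => sat (fo_part M) nosets (decode N c e) p); [apply Dp |].
  apply functional_extensionality; intro c; apply propositional_extensionality, E.
Qed.

Lemma definable_and p q : definable p -> definable q -> definable (And p q).
Proof. intros Dp Dq N e; apply X_and; auto. Qed.

Lemma definable_imp p q : definable p -> definable q -> definable (Imp p q).
Proof. intros Dp Dq N e; apply X_imp; auto. Qed.

Lemma X_family_const e : X_family (fun _ => e).
Proof. exists 0, (fun _ => 𝟘), e; split; auto using X_const. Qed.

Lemma X_family_scons rho g : X_family rho -> fun_in_X M g ->
  X_family (fun i => scons (g i) (rho i)).
Proof.
  intros (N & W & e & HW & Hrho) Hg.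
  exists (S N), (fun i => cpair (g i) (W i)), e; split; auto using X_cpair.
  intro i; simpl; rewrite cfst_cpair, csnd_cpair, Hrho; reflexivity.
Qed.

Lemma X_family_decode rho m V : X_family rho -> fun_in_X M V ->
  X_family (fun i => decode m (V i) (rho i)).
Proof.
  intros (N & W & e & HW & Hrho) HV.
  exists (m + N), (fun i => append_code m (V i) (W i)), e; split; auto using X_append.
  intro i; rewrite decode_append, Hrho; reflexivity.
Qed.

Lemma X_family_preim rho P : X_family rho -> definable_on_codes P ->
  X M (fun i => P (rho i)).
Proof.
  intros (N & W & e & HW & Hrho) HP.
  replace (fun i => P (rho i)) with (fun i => P (decode N (W i) e))
    by (apply functional_extensionality; intro i; rewrite Hrho; reflexivity).
  apply (X_preim (fun c => P (decode N c e))); auto.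
Qed.

Lemma skolem_tuple m P rho A : definable_on_codes P -> X_family rho -> X M A ->
  (forall i, A i -> exists v, P (decode m v (rho i))) ->
  exists V, fun_in_X M V /\ forall i, A i -> P (decode m (V i) (rho i)).
Proof.
  intros HP (N & W & e & HW & Hrho) HA Hex.
  set (Q z := ~ A (cfst z) \/ P (decode (m + N) (append_code m (csnd z) (W (cfst z))) e)).
  assert (HQX : X M Q).
  { apply X_or; [apply (X_preim (fun i => ~ A i)); auto using X_compl, X_cfst |].
    apply (X_preim (fun c => P (decode (m + N) c e))); auto.
    apply X_append; auto using X_csnd, X_comp, X_cfst. }
  destruct (least_witness_function Q HQX) as [V [HV HQV]].
  - intro i; destruct (classic (A i)) as [Ai | nAi].
    + destruct (Hex i Ai) as [v Hv]; exists v; right.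
      rewrite cfst_cpair, csnd_cpair, decode_append, <- Hrho; auto.
    + exists 𝟘; left; rewrite cfst_cpair; auto.
  - exists V; split; auto; intros i Ai.
    destruct (HQV i) as [H | H]; rewrite cfst_cpair in H; [contradiction |].
    rewrite csnd_cpair, decode_append, <- Hrho in H; auto.
Qed.

Lemma skolem_var P rho A : definable_on_codes P -> X_family rho -> X M A ->
  (forall i, A i -> exists y, P (scons y (rho i))) ->
  exists h, fun_in_X M h /\ forall i, A i -> P (scons (h i) (rho i)).
Proof.
  intros HP Hrho HA Hex.
  destruct (skolem_tuple 1 P rho A HP Hrho HA) as [V [HV HPV]].
  - intros i Ai; destruct (Hex i Ai) as [y Hy]; exists (cpair y 𝟘).
    simpl; rewrite cfst_cpair; auto.
  - exists (fun i => cfst (V i)); split; [apply X_comp; auto using X_cfst |].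
    intros i Ai; exact (HPV i Ai).
Qed.

(** * Łoś's theorem for Sigma_n formulas *)

Section Ultrapower.
Variable n : nat.
Hypothesis HSn : Sigma_n_comprehension M n.

Lemma truth_definable f : first_order f -> is_sigma n f -> definable f.
Proof.
  intros Hf Hs N e; destruct n as [|k].
  (* Decoding adds quantifiers, so for n = 0 Delta^0_1 comprehension is used. *)
  - assert (Hd : delta0 f) by (inversion Hs; auto).
    apply (X_delta1 (untuple true N 0 f) (untuple false N 0 f) full_sets e).
    + apply untuple_sigma, sig_pi, pi_0, Hd.
    + apply untuple_pi, pi_sig, sig_0, Hd.
    + apply full_sets_in_X.
    + intro c; rewrite sat_untuple_decode; apply sat_first_order_sets, Hf.
    + intro c; rewrite sat_untuple_decode; apply sat_first_order_sets, Hf.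
  - replace (fun c => sat (fo_part M) nosets (decode N c e) f)
      with (fun c => sat (fo_part M) nosets (scons c e) (untuple true N 0 f))
      by (apply functional_extensionality; intro c; apply propositional_extensionality;
          apply sat_untuple_decode).
    apply HSn; [apply untuple_first_order, Hf | apply untuple_sigma, Hs].
Qed.

Variable U : (carr M -> Prop) -> Prop.
Hypothesis HU : ultrafilter_on M U.

Lemma ultra_X A : U A -> X M A.
Proof. apply HU. Qed.
Lemma ultra_full : U (fun _ => True).
Proof. apply HU. Qed.
Lemma ultra_and A B : U A -> U B -> U (fun x => A x /\ B x).
Proof. apply HU. Qed.
Lemma ultra_up A B : U A -> X M B -> (forall x, A x -> B x) -> U B.
Proof. apply HU. Qed.

Lemma ultra_nonempty A : U A -> exists x, A x.
Proof.
  intro HA; apply NNPP; intro Hempty; apply HU.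
  replace (fun _ : carr M => False) with A; auto.
  apply functional_extensionality; intro x; apply propositional_extensionality.
  split; [intro Ax; apply Hempty; eauto | contradiction].
Qed.

Lemma ultra_compl A : X M A -> (U (fun x => ~ A x) <-> ~ U A).
Proof.
  intro HA; split.
  - intros H1 H2; destruct (ultra_nonempty _ (ultra_and _ _ H1 H2)) as [x [H1x H2x]]; auto.
  - intro H; destruct HU as (_ & _ & _ & _ & _ & Hdich); destruct (Hdich A HA); tauto.
Qed.

Lemma ultra_ext A B : U A -> (forall x, A x <-> B x) -> U B.
Proof.
  intros HA E; replace B with A; auto.
  apply functional_extensionality; intro x; apply propositional_extensionality, E.
Qed.

Local Notation UP := (restricted_ultrapower M U).

Definition pointwise (rho : carr M -> nat -> carr M) : nat -> carr M -> carr M :=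
  fun k i => rho i k.

Lemma teval_pointwise rho t i :
  teval UP (pointwise rho) t i = teval (fo_part M) (rho i) t.
Proof. induction t; simpl; try rewrite IHt1, IHt2; reflexivity. Qed.

Lemma pointwise_scons g rho :
  scons g (pointwise rho) = pointwise (fun i => scons (g i) (rho i)).
Proof.
  apply functional_extensionality; intros [|k]; apply functional_extensionality; reflexivity.
Qed.

Definition los (p : form) : Prop :=
  forall rho, X_family rho ->
  (sat UP nosets (pointwise rho) p <-> U (fun i => sat (fo_part M) nosets (rho i) p)).

Lemma los_eq a b : los (Eq a b).
Proof.
  intros rho Hrho; simpl; split; intro H;
    (eapply ultra_ext; [exact H | intro i; cbv beta; rewrite !teval_pointwise; reflexivity]).
Qed.

Lemma los_lt a b : los (Lt a b).
Proof.
  intros rho Hrho; simpl; split; intro H;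
    (eapply ultra_ext; [exact H | intro i; cbv beta; rewrite !teval_pointwise; reflexivity]).
Qed.

Lemma los_not p : definable p -> los p -> los (Not p).
Proof.
  intros Dp Lp rho Hrho; simpl; rewrite (Lp rho Hrho).
  symmetry; apply ultra_compl; exact (X_family_preim _ _ Hrho Dp).
Qed.

Lemma los_and p q : definable p -> definable q -> los p -> los q -> los (And p q).
Proof.
  intros Dp Dq Lp Lq rho Hrho; simpl; rewrite (Lp rho Hrho), (Lq rho Hrho); split.
  - intros [Hp Hq]; apply ultra_and; auto.
  - intro H; split.
    + eapply ultra_up; [exact H | exact (X_family_preim _ _ Hrho Dp) |]; simpl; tauto.
    + eapply ultra_up; [exact H | exact (X_family_preim _ _ Hrho Dq) |]; simpl; tauto.
Qed.

Lemma los_or p q : definable p -> definable q -> los p -> los q -> los (Or p q).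
Proof.
  intros Dp Dq Lp Lq rho Hrho; simpl; rewrite (Lp rho Hrho), (Lq rho Hrho).
  assert (Xp := X_family_preim _ _ Hrho Dp); assert (Xq := X_family_preim _ _ Hrho Dq).
  split.
  - intros [H | H]; (eapply ultra_up; [exact H | apply X_or; auto |]); simpl; tauto.
  - intro H; apply NNPP; intro Hn.
    apply not_or_and in Hn as [Hnp Hnq].
    apply ultra_compl in Hnp, Hnq; auto.
    destruct (ultra_nonempty _ (ultra_and _ _ H (ultra_and _ _ Hnp Hnq))) as [i Hi].
    simpl in Hi; tauto.
Qed.

Lemma los_imp p q : definable p -> definable q -> los p -> los q -> los (Imp p q).
Proof.
  intros Dp Dq Lp Lq rho Hrho; simpl; rewrite (Lp rho Hrho), (Lq rho Hrho).
  assert (Xp := X_family_preim _ _ Hrho Dp); assert (Xq := X_family_preim _ _ Hrho Dq).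
  split.
  - intro H; destruct (classic (U (fun i => sat (fo_part M) nosets (rho i) p))) as [Hp | Hp].
    + eapply ultra_up; [exact (H Hp) | apply X_imp; auto |]; simpl; tauto.
    + apply ultra_compl in Hp; auto.
      eapply ultra_up; [exact Hp | apply X_imp; auto |]; simpl; tauto.
  - intros H Hp; eapply ultra_up; [exact (ultra_and _ _ H Hp) | auto |]; simpl; tauto.
Qed.

Lemma los_ex p : definable p -> definable (Ex p) -> los p -> los (Ex p).
Proof.
  intros Dp DEp Lp rho Hrho; simpl; split.
  - intros [g [Hg H]]; rewrite pointwise_scons, (Lp _ (X_family_scons _ _ Hrho Hg)) in H.
    eapply ultra_up; [exact H | apply (X_family_preim _ _ Hrho DEp) |].
    intros i Hi; exists (g i); split; auto; exact I.
  - intro H.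
    destruct (skolem_var _ rho _ Dp Hrho (X_family_preim _ _ Hrho DEp)) as [h [Hh Hwit]].
    { intros i [y [_ Hy]]; exists y; exact Hy. }
    exists h; split; auto; rewrite pointwise_scons, (Lp _ (X_family_scons _ _ Hrho Hh)).
    eapply ultra_up; [exact H | exact (X_family_preim _ _ (X_family_scons _ _ Hrho Hh) Dp) |].
    exact Hwit.
Qed.

Lemma los_all p : definable p -> definable (All p) -> los p -> los (All p).
Proof.
  intros Dp DAp Lp rho Hrho; simpl; split.
  - intro H; apply NNPP; intro Hn.
    apply ultra_compl in Hn; [| exact (X_family_preim _ _ Hrho DAp)].
    destruct (skolem_var (fun rho => ~ sat (fo_part M) nosets rho p) rho _
                (definable_compl _ Dp) Hrho (ultra_X _ Hn)) as [h [Hh Hwit]].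
    { intros i Hi; apply NNPP; intro Hall; apply Hi; simpl; intros y _.
      apply NNPP; intro Hy; apply Hall; eauto. }
    assert (Hp := H h Hh); rewrite pointwise_scons, (Lp _ (X_family_scons _ _ Hrho Hh)) in Hp.
    destruct (ultra_nonempty _ (ultra_and _ _ Hp Hn)) as [i [Hi Hni]].
    exact (Hwit i Hni Hi).
  - intros H g Hg; rewrite pointwise_scons, (Lp _ (X_family_scons _ _ Hrho Hg)).
    eapply ultra_up; [exact H | exact (X_family_preim _ _ (X_family_scons _ _ Hrho Hg) Dp) |].
    intros i Hi; apply Hi; exact I.
Qed.

Lemma los_equiv p q : (forall St sets rho, sat St sets rho p <-> sat St sets rho q) ->
  los q -> los p.
Proof.
  intros E Lq rho Hrho; rewrite E, (Lq rho Hrho).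
  split; intro H; eapply ultra_ext; eauto; intro i; rewrite E; reflexivity.
Qed.

Lemma los_bex t p : definable (Lt (Var 0) (ren_term S t)) -> definable p ->
  definable (BEx t p) -> los p -> los (BEx t p).
Proof.
  intros Dlt Dp DB Lp; apply (los_equiv _ _ (fun St sets rho => sat_BEx_Ex St sets rho t p)).
  apply los_ex; [apply definable_and; auto | | apply los_and; auto using los_lt].
  apply (definable_equiv (BEx t p)); auto using sat_BEx_Ex.
Qed.

Lemma los_ball t p : definable (Lt (Var 0) (ren_term S t)) -> definable p ->
  definable (BAll t p) -> los p -> los (BAll t p).
Proof.
  intros Dlt Dp DB Lp; apply (los_equiv _ _ (fun St sets rho => sat_BAll_All St sets rho t p)).
  apply los_all; [apply definable_imp; auto | | apply los_imp; auto using los_lt].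
  apply (definable_equiv (BAll t p)); auto using sat_BAll_All.
Qed.

Lemma delta0_definable p : delta0 p -> first_order p -> definable p.
Proof. intros Hd Hf; apply truth_definable, delta0_sigma; auto. Qed.

Lemma los_delta0 f : delta0 f -> first_order f -> los f.
Proof.
  induction 1 as [a b | a b | a k | p Hp IH | p q Hp IHp Hq IHq | p q Hp IHp Hq IHq
                  | p q Hp IHp Hq IHq | t p Hp IH | t p Hp IH]; simpl; intro Hf.
  - apply los_eq.
  - apply los_lt.
  - contradiction.
  - apply los_not; auto using delta0_definable.
  - destruct Hf; apply los_and; auto using delta0_definable.
  - destruct Hf; apply los_or; auto using delta0_definable.
  - destruct Hf; apply los_imp; auto using delta0_definable.
  - apply los_bex; auto; apply delta0_definable; simpl; auto using d0_lt, d0_bex.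
  - apply los_ball; auto; apply delta0_definable; simpl; auto using d0_lt, d0_ball.
Qed.

Lemma los_sigma f : is_sigma n f -> first_order f -> los f.
Proof.
  induction f; intros Hs Hf;
    try (apply los_delta0; auto; apply (sigma_unquantified n); auto; exact (fun H => H)).
  - pose proof (sigma_Ex_body _ _ Hs).
    apply los_ex; auto using truth_definable.
  - pose proof (sigma_All_body _ _ Hs).
    apply los_all; auto using truth_definable.
Qed.

Lemma los_everywhere f rho : is_sigma n f -> first_order f -> X_family rho ->
  (forall i, sat (fo_part M) nosets (rho i) f) -> sat UP nosets (pointwise rho) f.
Proof.
  intros Hs Hf Hrho H; apply (los_sigma f Hs Hf rho Hrho).
  eapply ultra_up; [apply ultra_full | | intros i _; apply H].
  exact (X_family_preim _ _ Hrho (truth_definable f Hf Hs)).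
Qed.

(** * Transfer of Sigma_(n+2) formulas *)

Lemma sat_alls_pointwise m : forall c rho V,
  sat UP nosets (pointwise rho) (alls m c) -> fun_in_X M V ->
  sat UP nosets (pointwise (fun i => decode m (V i) (rho i))) c.
Proof.
  induction m as [|m IH]; intros c rho V H HV; [exact H |].
  assert (Hall := IH (All c) rho (fun i => csnd (V i)) H (X_comp _ _ HV X_csnd)).
  simpl in Hall; specialize (Hall (fun i => cfst (V i)) (X_comp _ _ HV X_cfst)).
  rewrite pointwise_scons in Hall; exact Hall.
Qed.

Lemma sat_alls_intro m : forall c rho,
  (forall v, sat (fo_part M) nosets (decode m v rho) c) ->
  sat (fo_part M) nosets rho (alls m c).
Proof.
  induction m as [|m IH]; intros c rho H; [exact (H 𝟘) |].
  apply IH; intros v x _; assert (Hx := H (cpair x v)).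
  simpl in Hx; rewrite cfst_cpair, csnd_cpair in Hx; exact Hx.
Qed.

(* The whole universal block is witnessed at once: its Sigma_n matrix, unlike
   the Sigma_(n+1) formulas obtained by peeling one quantifier, has its truth
   set in X. *)
Lemma pi_descends psi : is_pi (S n) psi -> first_order psi -> forall rho, X_family rho ->
  sat UP nosets (pointwise rho) psi -> exists i, sat (fo_part M) nosets (rho i) psi.
Proof.
  intros Hp Hf rho Hrho H.
  destruct (pi_succ_alls _ _ Hp) as [m [c [-> Hc]]]; apply alls_first_order in Hf.
  apply NNPP; intro Hnone.
  destruct (skolem_tuple m (fun rho => ~ sat (fo_part M) nosets rho c) rho (fun _ => True)
              (definable_compl _ (truth_definable c Hf Hc)) Hrho X_full) as [V [HV HVc]].
  { intros i _; apply NNPP; intro Hall; apply Hnone; exists i.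
    apply sat_alls_intro; intro v; apply NNPP; intro Hv; apply Hall; eauto. }
  assert (Hsat := sat_alls_pointwise m c rho V H HV).
  apply (los_sigma c Hc Hf _ (X_family_decode _ _ _ Hrho HV)) in Hsat.
  destruct (ultra_nonempty _ Hsat) as [i Hi]; exact (HVc i I Hi).
Qed.

Lemma sigma_descends f : is_sigma (S (S n)) f -> first_order f -> forall rho, X_family rho ->
  sat UP nosets (pointwise rho) f -> exists i, sat (fo_part M) nosets (rho i) f.
Proof.
  induction f; intros Hs Hf rho Hrho H;
    try (apply pi_descends; auto; apply sigma_succ_not_Ex; auto; exact (fun H => H)).
  destruct H as [g [Hg H]]; rewrite pointwise_scons in H.
  destruct (IHf (sigma_Ex_body _ _ Hs) Hf _ (X_family_scons _ _ Hrho Hg) H) as [i Hi].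
  exists i, (g i); split; [exact I | exact Hi].
Qed.

Lemma pi_ascends psi : is_pi (S n) psi -> first_order psi -> forall rho, X_family rho ->
  (forall i, sat (fo_part M) nosets (rho i) psi) -> sat UP nosets (pointwise rho) psi.
Proof.
  induction psi; intros Hp Hf rho Hrho H;
    try (apply los_everywhere; auto; apply pi_succ_not_All; auto; exact (fun H => H)).
  intros g Hg; rewrite pointwise_scons.
  apply IHpsi; auto using pi_All_body, X_family_scons; intro i; apply H; exact I.
Qed.

Lemma sigma_ascends f : is_sigma (S (S n)) f -> first_order f -> forall e,
  sat (fo_part M) nosets e f -> sat UP nosets (pointwise (fun _ => e)) f.
Proof.
  induction f; intros Hs Hf e H;
    try (apply pi_ascends; auto using X_family_const;
         apply sigma_succ_not_Ex; auto; exact (fun H => H)).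
  destruct H as [x [_ Hx]]; exists (fun _ => x); split; [apply X_const |].
  rewrite pointwise_scons; exact (IHf (sigma_Ex_body _ _ Hs) Hf _ Hx).
Qed.

End Ultrapower.
End Model.

Theorem corollary3p7 (M : model2) (U : (carr M -> Prop) -> Prop) (n : nat) :
  RCA0 M ->
  ultrafilter_on M U ->
  (forall A, U A -> cofinal M A) ->
  Sigma_n_comprehension M n ->
  forall phi : form, first_order phi -> is_sigma (n + 2) phi ->
  forall e : nat -> carr M,
    sat (fo_part M) nosets e phi <->
    sat (restricted_ultrapower M U) nosets (fun k => const_fun M (e k)) phi.
Proof.
  intros [HQ [HI HD]] HU _ HSn phi Hf Hs e.
  assert (X_full : X M (fun _ => True)) by (apply HU, HU).
  replace (n + 2) with (S (S n)) in Hs by lia.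
  split.
  - intro H; eapply sigma_ascends; eauto.
  - intro H; destruct (sigma_descends M HQ HI HD X_full n HSn U HU phi Hs Hf (fun _ => e)
                          (X_family_const M HQ HI HD X_full e) H) as [_ He].
    exact He.
Qed.
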